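(* Consider the liquidation problem of the context, let $t\in[0,T)$ and $x\in\mathbb{R}^n$, and write $v(t,x;\Lambda)$ for the value function as a function of the price impact matrix. (i) $v(t,x;\Lambda)$ is increasing in $\Lambda$, i.e. $\Lambda\le\tilde\Lambda$ (in the Loewner order) implies $v(t,x;\Lambda)\le v(t,x;\tilde\Lambda)$. (ii) Let $\Lambda=\operatorname{diag}(\lambda_1,\dots,\lambda_n)$. For $i=1,\dots,n$, $v(t,x;\lambda_i)/\lambda_i$ is decreasing in $\lambda_i$ (the other parameters held fixed).
   Context: Model: fix $T>0$, $n\ge1$, $\alpha\ge0$, a symmetric positive definite $\Lambda\in\mathbb{R}^{n\times n}$ and a symmetric nonnegative definite $\Sigma$. On a filtered probability space, $\tilde P$ is an $n$-dimensional square-integrable càdlàg martingale with $\mathrm{Cov}(\tilde P_i(t),\tilde P_j(t))=t\Sigma_{i,j}$, and $\pi=(\pi_1,\dots,\pi_n)$ has independent Poisson components with intensities $\theta_i\ge0$, independent of $\tilde P$; filtration = completion of $\sigma(\tilde P(s),\pi(r):s\le t,r<t)$. Strategies $u=(\xi,\eta)$ on $[t,T)$ ($\xi$ progressively measurable, $\eta$ predictable) control $dX^u=-\xi ds-\eta\,d\pi$, $X^u(t)=x$; $\mathbb{A}(t,x)$ consists of those with a unique solution, $\mathbb{E}\int_t^T\|\xi\|_2^4<\infty$, $\mathbb{E}\int_t^T\|\eta\|_2^8<\infty$, $\eta_i\equiv0$ if $\theta_i=0$, and $\lim_{s\to T-}X^u(s)=0$ a.s. The value function is $v(t,x)=\inf_{u\in\mathbb{A}(t,x)}\mathbb{E}\big[\int_t^T(\xi^\top\Lambda\xi+\alpha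 X^{u\top}\Sigma X^u)ds\big]$. *)

From HB Require Import structures.
From mathcomp Require Import all_boot all_order all_algebra.
From mathcomp Require Import all_classical all_reals all_analysis.
Set Implicit Arguments. Unset Strict Implicit. Unset Printing Implicit Defensive.
Import Order.TTheory GRing.Theory Num.Theory.
Import numFieldNormedType.Exports.
Local Open Scope classical_set_scope.
Local Open Scope ring_scope.

Section Liquidation.
Context {R : realType} {d : measure_display} {Omega : measurableType d}.
Variable (P : probability Omega R).

Definition qform {n} (A : 'M[R]_n) (v : 'cV[R]_n) : R := (v^T *m A *m v) 0 0.
Definition sym_mx {n} (A : 'M[R]_n) := A^T = A.
Definition posdef {n} (A : 'M[R]_n) := sym_mx A /\ forall v, v != 0 -> 0 < qform A v.
Definition psd {n} (A : 'M[R]_n) := sym_mx A /\ forall v, 0 <= qform A v.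
Definition loewner_le {n} (A B : 'M[R]_n) := forall v, qform A v <= qform B v.

Definition rv_sets (f : Omega -> R) : set (set Omega) :=
  [set f @^-1` B | B in [set B : set R | measurable B]].

Definition completion (G : set (set Omega)) : set (set Omega) :=
  [set A | exists B C, G B /\ measurable C /\ P C = 0%E /\
                      (A `\` B) `|` (B `\` A) `<=` C].

Definition indep_family (I : finType) (G : I -> set (set Omega)) :=
  forall (J : {set I}) (A : I -> set Omega),
    (forall i, i \in J -> G i (A i) /\ measurable (A i)) ->
    P (\bigcap_(i in [set i | i \in J]) A i) = (\prod_(i in J) P (A i))%E.

Definition cadlag_on (T : R) (f : R -> R) :=
  (forall s, 0 <= s < T -> f r @[r --> s^'+] --> f s) /\
  (forall s, 0 < s <= T -> cvg (f r @[r --> s^'-])).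

Definition pmf_poisson (r : R) (k : nat) : R := expR (- r) * r ^+ k / (k`!)%:R.

Definition poisson_process (T th : R) (N : R -> Omega -> nat) :=
  (forall w, N 0 w = 0%N) /\
  (forall w s u, 0 <= s <= u -> u <= T -> (N s w <= N u w)%N) /\
  (forall w s, 0 <= s < T -> exists2 e : R, 0 < e &
        forall r, s <= r < s + e -> N r w = N s w) /\
  (forall w s, 0 < s <= T -> exists2 e : R, 0 < e &
        forall r, s - e < r < s -> (N s w <= (N r w).+1)%N) /\
  (forall s u m, 0 <= s <= u -> u <= T ->
        measurable [set w | (N u w - N s w)%N = m] /\
        P [set w | (N u w - N s w)%N = m] = (pmf_poisson (th * (u - s)) m)%:E) /\
  (forall (k : nat) (s : nat -> R) (m : nat -> nat),
        0 <= s 0%N -> (forall j, (j < k)%N -> s j <= s j.+1) -> s k <= T ->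
        P (\bigcap_(j in `I_k) [set w | (N (s j.+1) w - N (s j) w)%N = m j]) =
        (\prod_(j < k) P [set w | (N (s j.+1) w - N (s j) w)%N = m j])%E).

Section Market.
Variables (n : nat) (T alpha : R) (Sigma : 'M[R]_n) (theta : 'I_n -> R)
          (Pt : R -> Omega -> 'cV[R]_n) (Pi : R -> Omega -> 'I_n -> nat).

Definition Ptc i s := fun w => Pt s w i 0.
Definition Pic i s := fun w => ((Pi s w i)%:R : R).

Definition gen_sets (t : R) : set (set Omega) :=
  [set A | exists i s, 0 <= s <= t /\ rv_sets (Ptc i s) A] `|`
  [set A | exists i r, 0 <= r < t /\ rv_sets (Pic i r) A].

Definition Filt (t : R) : set (set Omega) := completion (<<s gen_sets t >>).

Definition sigma_Pt : set (set Omega) :=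
  <<s [set A | exists i s, 0 <= s <= T /\ rv_sets (Ptc i s) A] >>.
Definition sigma_Pi (i : 'I_n) : set (set Omega) :=
  <<s [set A | exists r, 0 <= r <= T /\ rv_sets (Pic i r) A] >>.

Definition market_hyp :=
  (* Pt: square-integrable cadlag martingale w.r.t. Filt with Cov = t Sigma *)
  (forall i s, 0 <= s <= T -> measurable_fun setT (Ptc i s) /\
      P.-integrable setT (EFin \o Ptc i s) /\
      P.-integrable setT (EFin \o (fun w => Ptc i s w ^+ 2))) /\
  (forall i w, cadlag_on T (fun s => Ptc i s w)) /\
  (forall i s u A, 0 <= s <= u -> u <= T -> measurable A -> Filt s A ->
      (\int[P]_(w in A) (Ptc i u w - Ptc i s w)%:E = 0)%E) /\
  (forall i j s, 0 <= s <= T -> covariance P (Ptc i s) (Ptc j s) = (s * Sigma i j)%:E) /\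
  (* independent Poisson components, independent of Pt *)
  (forall i, 0 <= theta i) /\
  (forall i, poisson_process T (theta i) (fun s w => Pi s w i)) /\
  indep_family (fun o : option 'I_n => if o is Some i then sigma_Pi i else sigma_Pt).

Definition jump_time (i : 'I_n) (k : nat) (w : Omega) : R :=
  inf [set r : R | (k <= Pi r w i)%N].

(* pathwise integral  int_(t,s] eta_i dPi_i  for the counting path Pi_i *)
Definition count_int (eta : R -> Omega -> 'cV[R]_n) (t s : R) (w : Omega) (i : 'I_n) : R :=
  \sum_((Pi t w i).+1 <= k < (Pi s w i).+1) eta (jump_time i k w) w i 0.

Definition state (xi eta : R -> Omega -> 'cV[R]_n) (t : R) (x : 'cV[R]_n) (s : R) (w : Omega)
  : 'cV[R]_n :=
  x - \col_i (Rintegral lebesgue_measure `[t, s] (fun r => xi r w i 0))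
    - \col_i (count_int eta t s w i).

Definition progressive (t : R) (xi : R -> Omega -> 'cV[R]_n) :=
  forall s i (B : set R), t <= s < T -> measurable B ->
    <<s [set A `*` C | A in [set A : set R | measurable A] & C in Filt s] >>
      [set p : R * Omega | t <= p.1 <= s /\ B (xi p.1 p.2 i 0)].

Definition pred_rects (t : R) : set (set (R * Omega)) :=
  [set `[t, t] `*` C | C in Filt t] `|`
  [set S | exists a b C, t <= a /\ a < b /\ b <= T /\ Filt a C /\ S = `]a, b] `*` C].

Definition predictable (t : R) (eta : R -> Omega -> 'cV[R]_n) :=
  forall i (B : set R), measurable B ->
    <<s pred_rects t >> [set p : R * Omega | t <= p.1 < T /\ B (eta p.1 p.2 i 0)].

Definition admissible (t : R) (x : 'cV[R]_n)
  (u : (R -> Omega -> 'cV[R]_n) * (R -> Omega -> 'cV[R]_n)) : Prop :=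
  let xi := u.1 in let eta := u.2 in
  progressive t xi /\ predictable t eta /\
  (* existence (and uniqueness) of the solution of dX = -xi ds - eta dPi *)
  {ae P, forall w, forall s i, t <= s < T ->
      lebesgue_measure.-integrable `[t, s] (EFin \o (fun r => xi r w i 0))} /\
  (\int[P]_w \int[lebesgue_measure]_(s in `[t, T[)
      (((\sum_i (xi s w i 0) ^+ 2) ^+ 2)%:E) < +oo)%E /\
  (\int[P]_w \int[lebesgue_measure]_(s in `[t, T[)
      (((\sum_i (eta s w i 0) ^+ 2) ^+ 4)%:E) < +oo)%E /\
  (forall i, theta i = 0 -> forall s w, t <= s < T -> eta s w i 0 = 0) /\
  {ae P, forall w, forall i, (state xi eta t x s w i 0) @[s --> T^'-] --> 0}.

Definition cost (Lambda : 'M[R]_n) (t : R) (x : 'cV[R]_n)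
  (u : (R -> Omega -> 'cV[R]_n) * (R -> Omega -> 'cV[R]_n)) : \bar R :=
  (\int[P]_w \int[lebesgue_measure]_(s in `[t, T[)
     ((qform Lambda (u.1 s w) + alpha * qform Sigma (state u.1 u.2 t x s w))%:E))%E.

Definition value (t : R) (x : 'cV[R]_n) (Lambda : 'M[R]_n) : \bar R :=
  ereal_inf [set cost Lambda t x u | u in admissible t x].

End Market.
End Liquidation.

(** Both statements follow from one pathwise comparison of costs.  If
    [qform L' v <= k * qform L v] for all [v] with [k >= 1], then the running
    cost of every strategy under [L'] is at most [k] times its cost under [L],
    because the risk term [alpha * qform Sigma X] does not depend on the impact
    matrix; hence [v(L') <= k * v(L)] (infimum over the same admissible set).
    The Loewner order gives this with [k = 1].  For a diagonal [L] and
    [li <= li'], replacing [li] by [li'] multiplies the [i]-th diagonal entry by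
    [k = li' / li >= 1] and the others by [1 <= k], so
    [v(li') <= (li' / li) v(li)], i.e. [v(li') / li' <= v(li) / li]. *)
From HB Require Import structures.
From mathcomp Require Import all_boot all_order all_algebra.
From mathcomp Require Import all_classical all_reals all_analysis.
Import Order.TTheory GRing.Theory Num.Theory.
Local Open Scope classical_set_scope.
Local Open Scope ring_scope.

(* The integrands of [cost] are not known to be measurable, so the library's
   [ge0_le_integral] and [ge0_integralZl] do not apply; for nonnegative
   integrands both facts follow directly from the definition of the integral
   as a supremum of integrals of simple functions. *)
Section nonneg_integral_nonmeasurable.
Context {d : measure_display} {T : measurableType d} {R : realType}.
Variable mu : {measure set T -> \bar R}.
Local Open Scope ereal_scope.
Import HBNNSimple.

Lemma ge0_le_integral_nonmeasurable (D : set T) (f g : T -> \bar R) :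
  (forall x, D x -> 0 <= f x) -> (forall x, D x -> f x <= g x) ->
  \int[mu]_(x in D) f x <= \int[mu]_(x in D) g x.
Proof.
move=> f0 fg.
have g0 x : D x -> 0 <= g x by move=> Dx; exact: le_trans (f0 x Dx) (fg x Dx).
rewrite (ge0_integralE mu f0) (ge0_integralE mu g0).
apply: ge_ereal_sup => _ [h hf <-]; apply: ereal_sup_ubound; exists h => //= x.
apply: le_trans (hf x) _; rewrite /restrict; case: ifP => // /set_mem Dx.
exact: fg.
Qed.

Lemma ge0_integralZl_le_nonmeasurable (D : set T) (f : T -> \bar R) (k : R) :
  (0 < k)%R -> (forall x, D x -> 0 <= f x) ->
  \int[mu]_(x in D) (k%:E * f x) <= k%:E * \int[mu]_(x in D) f x.
Proof.
move=> k0 f0.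
have kf0 x : D x -> 0 <= k%:E * f x.
  by move=> Dx; apply: mule_ge0; [rewrite lee_fin ltW | exact: f0].
rewrite (ge0_integralE mu kf0) (ge0_integralE mu f0).
apply: ge_ereal_sup => _ [h hf <-].
have kV0 : (0 <= k^-1)%R by rewrite invr_ge0 ltW.
pose hk := scale_nnsfun h kV0.
have -> : sintegral mu h = k%:E * sintegral mu hk.
  by rewrite sintegralrM muleA -EFinM mulfV ?gt_eqF // mul1e.
rewrite lee_pmul2l ?lte_fin //; apply: ereal_sup_ubound; exists hk => //= x.
have := hf x; rewrite /restrict /= EFinM; case: ifP => _ hx.
  apply: le_trans (lee_wpmul2l _ hx) _; first by rewrite lee_fin.
  by rewrite muleA -EFinM mulVf ?gt_eqF // mul1e.
apply: le_trans (lee_wpmul2l _ hx) _; first by rewrite lee_fin.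
by rewrite [X in _ * X]/point /= mule0.
Qed.

End nonneg_integral_nonmeasurable.

Section quadratic_forms.
Context {R : realType} {n : nat}.

Lemma qform0 (A : 'M[R]_n) : qform A 0 = 0.
Proof. by rewrite /qform trmx0 !mul0mx mxE. Qed.

Lemma posdef_qform_ge0 (A : 'M[R]_n) v : posdef A -> 0 <= qform A v.
Proof.
move=> [_ A0]; have [->|v0] := eqVneq v 0; first by rewrite qform0.
exact/ltW/A0.
Qed.

Lemma qform_diag (r : 'rV[R]_n) v : qform (diag_mx r) v = \sum_j r 0 j * v j 0 ^+ 2.
Proof.
rewrite /qform mul_mx_diag mxE; apply: eq_bigr => j _.
by rewrite !mxE mulrA [_ * r 0 j]mulrC -mulrA.
Qed.

Lemma qform_diag_ge0 (r : 'rV[R]_n) v :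
  (forall j, 0 <= r 0 j) -> 0 <= qform (diag_mx r) v.
Proof.
by move=> r0; rewrite qform_diag; apply: sumr_ge0 => j _; rewrite mulr_ge0 ?sqr_ge0.
Qed.

Lemma qform_diag_le_scale (r r' : 'rV[R]_n) (k : R) v :
  (forall j, r' 0 j <= k * r 0 j) ->
  qform (diag_mx r') v <= k * qform (diag_mx r) v.
Proof.
move=> rr'; rewrite !qform_diag mulr_sumr; apply: ler_sum => j _.
by rewrite mulrA ler_wpM2r ?sqr_ge0.
Qed.

End quadratic_forms.

Section value_comparison.
Context {R : realType} {d : measure_display} {Omega : measurableType d}.
Variables (P : probability Omega R) (n : nat) (T alpha : R) (Sigma : 'M[R]_n)
  (theta : 'I_n -> R) (Pt : R -> Omega -> 'cV[R]_n) (Pi : R -> Omega -> 'I_n -> nat).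
Hypotheses (alpha_ge0 : 0 <= alpha) (Sigma_psd : psd Sigma).
Local Open Scope ereal_scope.

Lemma cost_le_scale (L L' : 'M[R]_n) (k : R) t x u :
  (1 <= k)%R -> (forall v, 0 <= qform L' v)%R ->
  (forall v, qform L' v <= k * qform L v)%R ->
  cost P T alpha Sigma Pi L' t x u <= k%:E * cost P T alpha Sigma Pi L t x u.
Proof.
move=> k1 L'0 L'L; have k0 : (0 < k)%R by exact: lt_le_trans k1.
have risk0 X : (0 <= alpha * qform Sigma X)%R by rewrite mulr_ge0 //; case: Sigma_psd.
have L0 v : (0 <= qform L v)%R.
  by rewrite -(pmulr_rge0 _ k0); exact: le_trans (L'0 v) (L'L v).
rewrite /cost; apply: le_trans (ge0_integralZl_le_nonmeasurable _ _ _ _ k0 _); last first.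
  by move=> w _; apply: integral_ge0 => s _; rewrite lee_fin addr_ge0.
apply: ge0_le_integral_nonmeasurable => [w _|w _].
  by apply: integral_ge0 => s _; rewrite lee_fin addr_ge0.
apply: le_trans (ge0_integralZl_le_nonmeasurable _ _ _ _ k0 _); last first.
  by move=> s _; rewrite lee_fin addr_ge0.
apply: ge0_le_integral_nonmeasurable => [s _|s _]; rewrite lee_fin ?addr_ge0 //.
by rewrite mulrDr lerD // ler_peMl.
Qed.

Lemma value_le_scale (L L' : 'M[R]_n) (k : R) t x :
  (1 <= k)%R -> (forall v, 0 <= qform L' v)%R ->
  (forall v, qform L' v <= k * qform L v)%R ->
  value P T alpha Sigma theta Pt Pi t x L' <=
    k%:E * value P T alpha Sigma theta Pt Pi t x L.
Proof.
move=> k1 L'0 L'L; have k0 : (0 < k)%R by exact: lt_le_trans k1.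
rewrite -lee_pdivrMl //; apply/ereal_infP => _ [u adm_u <-].
rewrite lee_pdivrMl //; apply: le_trans (@cost_le_scale L L' k t x u k1 L'0 L'L).
by apply: ereal_inf_lbound; exists u.
Qed.

End value_comparison.

Theorem proposition4p11 (R : realType) (d : measure_display) (Omega : measurableType d)
  (P : probability Omega R) (n : nat) (T alpha : R) (Sigma : 'M[R]_n)
  (theta : 'I_n -> R) (Pt : R -> Omega -> 'cV[R]_n) (Pi : R -> Omega -> 'I_n -> nat)
  (t : R) (x : 'cV[R]_n) :
  (0 < n)%N -> 0 < T -> 0 <= alpha -> psd Sigma ->
  market_hyp P T Sigma theta Pt Pi ->
  0 <= t < T ->
  (forall Lambda Lambda' : 'M[R]_n, posdef Lambda -> posdef Lambda' ->
     loewner_le Lambda Lambda' ->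
     (value P T alpha Sigma theta Pt Pi t x Lambda
        <= value P T alpha Sigma theta Pt Pi t x Lambda')%E) /\
  (forall (lam : 'I_n -> R) (i : 'I_n) (li li' : R),
     (forall j, 0 < lam j) -> 0 < li -> li <= li' ->
     let L := fun l : R => diag_mx (\row_j (if j == i then l else lam j)) in
     (value P T alpha Sigma theta Pt Pi t x (L li') * (li'^-1)%:E
        <= value P T alpha Sigma theta Pt Pi t x (L li) * (li^-1)%:E)%E).
Proof.
move=> _ _ alpha0 Sigma_psd _ _.
have value_le := value_le_scale P n T alpha Sigma theta Pt Pi alpha0 Sigma_psd.
split.
  move=> L L' L_pd _ LL'; rewrite -[X in (_ <= X)%E]mul1e.
  apply: value_le => // v; [exact: posdef_qform_ge0 | by rewrite mul1r].
move=> lam i li li' lam0 li0 lili'; cbv zeta; set L := (fun l : R => _).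
have li'0 : 0 < li' by exact: lt_le_trans lili'.
have k1 : 1 <= li' / li by rewrite ler_pdivlMr // mul1r.
have L_ge0 v : 0 <= qform (L li') v.
  by apply: qform_diag_ge0 => j; rewrite mxE; case: eqP => _; exact: ltW.
have L_le v : qform (L li') v <= li' / li * qform (L li) v.
  apply: qform_diag_le_scale => j; rewrite !mxE; case: eqP => _.
    by rewrite mulfVK ?gt_eqF.
  exact: ler_peMl (ltW (lam0 _)) k1.
apply: le_trans (lee_wpmul2r _ (value_le _ _ _ t x k1 L_ge0 L_le)) _.
  by rewrite lee_fin invr_ge0 ltW.
by rewrite muleAC -EFinM mulrAC mulfV ?gt_eqF // mul1r muleC.
Qed.
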